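(* If $(X_1,X_2)$ is an extensible pair, then $\gcd(\Delta_1\Delta_2,\det Z_k)=1$ for all $k\ge1$.
   Context: A marked Dynkin diagram $(X,\xi)$ is the Dynkin diagram of a symmetrizable generalized Cartan matrix $C(X)$ with a distinguished node $\xi$; $\det X:=\det C(X)$; $X(-1)$ is $X$ with $\xi$ and its incident edges deleted ($\det$ of the empty diagram is $1$); $\Delta_X=\det X-\det X(-1)$, and $\Delta_i:=\Delta_{X_i}$. A pair $(X_1,\xi_1),(X_2,\xi_2)$ of marked Dynkin diagrams is an extensible pair if $\det X_i\neq0$, $\Delta_i\ne0$, $\gcd(\det X_i,\Delta_i)=1$ for $i=1,2$, and $\gcd(\Delta_1,\Delta_2)=1$. $Z_k=Z_k(X_1,X_2)$ is obtained from the disjoint union of $X_1$, a path $A_k$ with nodes $1,\dots,k$ and $X_2$ by adding simple edges $\xi_1$—$1$ and $k$—$\xi_2$; $\det Z_k$ is the determinant of its Cartan matrix. *)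

From HB Require Import structures.
From mathcomp Require Import all_boot all_order all_algebra.
Set Implicit Arguments. Unset Strict Implicit. Unset Printing Implicit Defensive.
Import Order.TTheory GRing.Theory Num.Theory.
Local Open Scope ring_scope.

Definition is_gcm (n : nat) (C : 'M[int]_n) : Prop :=
  (forall i, C i i = 2) /\
  (forall i j, i != j -> C i j <= 0) /\
  (forall i j, C i j = 0 -> C j i = 0).

(* Symmetrizable: D C symmetric for some positive diagonal D
   (positive rational entries can be scaled to positive integers). *)
Definition symmetrizable (n : nat) (C : 'M[int]_n) : Prop :=
  exists d : 'I_n -> int, (forall i, 0 < d i) /\
    (forall i j, d i * C i j = d j * C j i).

(* A marked Dynkin diagram (X, xi) is given by its Cartan matrix C and xi. *)
Definition marked_sgcm (n : nat) (C : 'M[int]_n) (xi : 'I_n) : Prop :=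
  is_gcm C /\ symmetrizable C.

(* det X(-1): delete row and column xi (empty matrix has det 1). *)
Definition detm1 (n : nat) (C : 'M[int]_n) (xi : 'I_n) : int :=
  \det (row' xi (col' xi C)).

Definition Delta (n : nat) (C : 'M[int]_n) (xi : 'I_n) : int :=
  \det C - detm1 C xi.

Definition extensible_pair (n1 : nat) (C1 : 'M[int]_n1) (xi1 : 'I_n1)
    (n2 : nat) (C2 : 'M[int]_n2) (xi2 : 'I_n2) : Prop :=
  [/\ \det C1 != 0, Delta C1 xi1 != 0 & gcdz (\det C1) (Delta C1 xi1) = 1] /\
  [/\ \det C2 != 0, Delta C2 xi2 != 0 & gcdz (\det C2) (Delta C2 xi2) = 1] /\
  gcdz (Delta C1 xi1) (Delta C2 xi2) = 1.

(* Nodes of Z_k: X_1, then the path A_k (nodes 0..k-1 here, i.e. 1..k), then X_2. *)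
Definition Znode (n1 k n2 : nat) (i : 'I_(n1 + (k + n2))) : 'I_n1 + ('I_k + 'I_n2) :=
  match split i with inl a => inl a | inr b => inr (split b) end.

Definition Zentry (n1 k n2 : nat) (C1 : 'M[int]_n1) (xi1 : 'I_n1)
    (C2 : 'M[int]_n2) (xi2 : 'I_n2) (x y : 'I_n1 + ('I_k + 'I_n2)) : int :=
  match x, y with
  | inl a, inl b => C1 a b
  | inr (inr a), inr (inr b) => C2 a b
  | inr (inl a), inr (inl b) =>
      if a == b then 2
      else if ((a.+1 == b :> nat) || (b.+1 == a :> nat)) then -1 else 0
  | inl a, inr (inl b) | inr (inl b), inl a =>
      if (a == xi1) && (b == 0%N :> nat) then -1 else 0
  | inr (inl a), inr (inr b) | inr (inr b), inr (inl a) =>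
      if (a.+1 == k)%N && (b == xi2) then -1 else 0
  | _, _ => 0
  end.

Definition Zmat (n1 n2 k : nat) (C1 : 'M[int]_n1) (xi1 : 'I_n1)
    (C2 : 'M[int]_n2) (xi2 : 'I_n2) : 'M[int]_(n1 + (k + n2)) :=
  \matrix_(i, j) Zentry C1 xi1 C2 xi2 (Znode i) (Znode j).

From mathcomp Require Import all_boot all_algebra.
From mathcomp Require Import perm ring.
Set Implicit Arguments. Unset Strict Implicit. Unset Printing Implicit Defensive.
Import GRing.Theory.
Local Open Scope ring_scope.

(* Joining two Cartan matrices A and D by a single edge u -- v (entries x at
   (u, v) and y at (v, u)) gives determinant det A det D - x y det A' det D',
   where A' and D' delete the nodes u and v.  Applied recursively to the chain
   A_k -- X_2 this yields det (A_k -- X_2) = det X_2 + k Delta_2, and then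
   det Z_k = det X_1 Delta_2 + Delta_1 (det X_2 + (k - 1) Delta_2).  Modulo
   Delta_1 this is det X_1 Delta_2 and modulo Delta_2 it is Delta_1 det X_2,
   both units by the extensibility hypotheses. *)

Section GlueDeterminant.
Variable R : comPzRingType.

Lemma det_colD n (B B1 B2 : 'M[R]_n) j0 :
  (forall i, B i j0 = B1 i j0 + B2 i j0) ->
  (forall i j, j != j0 -> B1 i j = B i j /\ B2 i j = B i j) ->
  \det B = \det B1 + \det B2.
Proof.
move=> eq_j0 eq_col'; rewrite !(expand_det_col _ j0) -big_split.
apply: eq_bigr => i _; rewrite /cofactor eq_j0 mulrDl; congr (_ * _ + _ * _).
all: congr (_ * \det (row' _ _)); apply/matrixP => i' j; rewrite !mxE.
all: by case: (eq_col' i' (lift j0 j)); rewrite // eq_sym neq_lift.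
Qed.

Definition pivot_col n (B : 'M[R]_n) (j0 : 'I_n) (x : R) : 'M[R]_n :=
  \matrix_(i, j) if j == j0 then (if i == j0 then x else 0) else B i j.

Lemma det_pivot_col n (B : 'M[R]_n) j0 x :
  \det (pivot_col B j0 x) = x * \det (row' j0 (col' j0 B)).
Proof.
rewrite (expand_det_col _ j0) (bigD1 j0) //= big1 ?addr0 => [|i /negbTE ne_ij0].
  rewrite mxE !eqxx /cofactor addnn -signr_odd odd_double mul1r.
  by congr (_ * \det _); apply/matrixP => i j; rewrite !mxE eq_sym (negbTE (neq_lift _ _)).
by rewrite mxE eqxx ne_ij0 mul0r.
Qed.

Definition glue_mx m n (A : 'M[R]_m) (D : 'M[R]_n) (u : 'I_m) (v : 'I_n) (x y : R)
    : 'M[R]_(m + n) :=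
  block_mx A (x *: delta_mx u v) (y *: delta_mx v u) D.

Section Glue.
Variables (m n : nat) (A : 'M[R]_m) (D : 'M[R]_n) (u : 'I_m) (v : 'I_n) (x y : R).

Lemma det_glue_mx_pivot :
  \det (glue_mx A D u v x y) = \det A * \det D + \det (glue_mx (pivot_col A u 0) D u v x y).
Proof.
rewrite -(det_ublock A (x *: delta_mx u v) D) /glue_mx.
apply: (det_colD (j0 := lshift n u)) => [i|i j].
  case: (split_ordP i) => a ->.
    by rewrite !block_mxEul !mxE !eqxx if_same addr0.
  by rewrite !block_mxEdl !mxE add0r.
case: (split_ordP i) => a ->; case: (split_ordP j) => b ->.
all: rewrite ?eq_lshift ?eq_rlshift => ne_bu.
all: rewrite ?block_mxEul ?block_mxEur ?block_mxEdl ?block_mxEdr ?mxE ?(negbTE ne_bu) //.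
by rewrite andbF mulr0.
Qed.

Lemma det_glue_mx_pivot0 :
  \det (glue_mx (pivot_col A u 0) D u v x y) =
    - (\det (pivot_col A u x) * \det (pivot_col D v y)).
Proof.
pose L : 'M[R]_(n, m) := \matrix_(i, j) if j == u then D i v else 0.
pose s := tperm (lshift n u) (rshift m v).
have sL b : s (lshift n b) = if b == u then rshift m v else lshift n b.
  case: eqP => [->|/eqP ne_bu]; first exact: tpermL.
  by rewrite tpermD // ?eq_lshift ?eq_rlshift // eq_sym.
have sR b : s (rshift m b) = if b == v then lshift n u else rshift m b.
  case: eqP => [->|/eqP ne_bv]; first exact: tpermR.
  by rewrite tpermD // ?eq_rshift ?eq_lrshift // eq_sym.
(* Exchanging the columns of u and v makes the matrix block lower triangular. *)
have swapE : xcol (lshift n u) (rshift m v) (glue_mx (pivot_col A u 0) D u v x y) =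
    block_mx (pivot_col A u x) 0 L (pivot_col D v y).
{ apply/matrixP => i j; rewrite /glue_mx mxE.
  case: (split_ordP i) => a ->{i}.
  all: case: (split_ordP j) => b ->{j}; [rewrite sL; case: (eqVneq b u) => [->|/negbTE ne]
                                        |rewrite sR; case: (eqVneq b v) => [->|/negbTE ne]].
  all: rewrite ?block_mxEul ?block_mxEur ?block_mxEdl ?block_mxEdr ?mxE ?eqxx /=.
  all: rewrite ?ne ?andbT ?andbF ?if_same ?mulr0 //.
  all: by rewrite mulr_natr mulrb. }
rewrite -(det_lblock _ L) -swapE xcolE det_mulmx det_perm odd_tperm eq_lrshift.
by rewrite expr1 mulrN1 opprK.
Qed.

Lemma det_glue_mx :
  \det (glue_mx A D u v x y) =
    \det A * \det D - x * y * \det (row' u (col' u A)) * \det (row' v (col' v D)).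
Proof. by rewrite det_glue_mx_pivot det_glue_mx_pivot0 !det_pivot_col; ring. Qed.

End Glue.
End GlueDeterminant.

Section Chain.
Variables (n2 : nat) (C2 : 'M[int]_n2) (xi2 : 'I_n2).

(* chain_mx j is the Cartan matrix of the path A_j (nodes 0, ..., j-1)
   followed by X_2, node j-1 being joined to xi2.  Entries are computed on nat
   indices so that deleting node 0 is the shift a.+1 |-> a (chain_entrySS);
   insubd only converts the in-range indices a - j back into nodes of X_2. *)
Definition path_entry (a b : nat) : int :=
  if a == b then 2 else if ((a.+1 == b) || (b.+1 == a))%N then -1 else 0.

Definition chain_entry (j a b : nat) : int :=
  if (a < j)%N then
    if (b < j)%N then path_entry a b
    else if ((a.+1 == j) && (b - j == xi2))%N then -1 else 0
  else if (b < j)%N then (if ((b.+1 == j) && (a - j == xi2))%N then -1 else 0)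
  else C2 (insubd xi2 (a - j)%N) (insubd xi2 (b - j)%N).

Definition chain_mx j : 'M[int]_(j + n2) := \matrix_(a, b) chain_entry j a b.

Definition chain_head j : 'I_(j + n2) :=
  match j return 'I_(j + n2) with 0 => xi2 | _.+1 => ord0 end.

Lemma chain_entrySS j a b : chain_entry j.+1 a.+1 b.+1 = chain_entry j a b.
Proof. by rewrite /chain_entry /path_entry !ltnS !subSS !eqSS. Qed.

Lemma chain_entry0S j b : chain_entry j.+1 0 b.+1 = if b == chain_head j then -1 else 0.
Proof.
rewrite /chain_entry /path_entry /=; case: j => [|j] /=; rewrite ?subn1 //.
rewrite ltnS; case: ltnP => [_|le_jb] /=; first by rewrite orbF eqSS eq_sym.
by case: eqP le_jb => // ->.
Qed.

Lemma chain_entryS0 j a : chain_entry j.+1 a.+1 0 = if a == chain_head j then -1 else 0.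
Proof.
rewrite /chain_entry /path_entry /=; case: j => [|j] /=; rewrite ?subn1 ?orbF //.
rewrite ltnS; case: ltnP => [_|le_ja] /=; first by rewrite eqSS eq_sym.
by case: eqP le_ja => // ->.
Qed.

Lemma chain_mxS j :
  (chain_mx j.+1 : 'M_(1 + (j + n2))) =
    glue_mx 2%:M (chain_mx j) ord0 (chain_head j) (-1) (-1).
Proof.
apply/matrixP => i l; rewrite /glue_mx.
case: (split_ordP i) => a ->{i}; case: (split_ordP l) => b ->{l}.
all: rewrite ?block_mxEul ?block_mxEur ?block_mxEdl ?block_mxEdr !mxE ?(ord1 a) ?(ord1 b) /=.
all: by rewrite ?add1n ?chain_entrySS ?chain_entry0S ?chain_entryS0 ?andbT ?mulr_natr ?mulrb.
Qed.

Lemma row'_col'_chain_mx j : row' ord0 (col' ord0 (chain_mx j.+1)) = chain_mx j.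
Proof. by apply/matrixP => a b; rewrite !mxE !lift0 chain_entrySS. Qed.

Lemma chain_mx0 : chain_mx 0 = C2.
Proof. by apply/matrixP => a b; rewrite !mxE /chain_entry !subn0 !valKd. Qed.

Lemma det_chain_mxS j :
  \det (chain_mx j.+1) =
    2 * \det (chain_mx j) - \det (row' (chain_head j) (col' (chain_head j) (chain_mx j))).
Proof.
rewrite -[LHS]/(\det (chain_mx j.+1 : 'M_(1 + (j + n2)))).
by rewrite chain_mxS det_glue_mx det_scalar1 det_mx00 mulrNN !mul1r.
Qed.

Lemma det_chain_mx j : \det (chain_mx j) = \det C2 + j%:Z * Delta C2 xi2.
Proof.
suff: \det (chain_mx j) = \det C2 + j%:Z * Delta C2 xi2 /\
      \det (chain_mx j.+1) = \det C2 + j.+1%:Z * Delta C2 xi2 by case.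
elim: j => [|j [IHj IHj1]].
  by rewrite det_chain_mxS chain_mx0 /Delta /detm1; split; ring.
by split=> //; rewrite det_chain_mxS row'_col'_chain_mx IHj IHj1 !intS; ring.
Qed.

End Chain.

Lemma Zmat_glue n1 n2 k (C1 : 'M[int]_n1) xi1 (C2 : 'M[int]_n2) xi2 :
  Zmat k.+1 C1 xi1 C2 xi2 = glue_mx C1 (chain_mx C2 xi2 k.+1) xi1 ord0 (-1) (-1).
Proof.
apply/matrixP => i l; rewrite /glue_mx mxE /Znode.
case: (split_ordP i) => a ->{i}; case: (split_ordP l) => b ->{l}.
all: rewrite ?(unsplitK (inl _)) ?(unsplitK (inr _)).
all: rewrite ?block_mxEul ?block_mxEur ?block_mxEdl ?block_mxEdr // ?mxE ?mulr_natr ?mulrb.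
all: try case: (split_ordP a) => c ->{a}; try case: (split_ordP b) => d ->{b}.
all: rewrite ?(unsplitK (inl _)) ?(unsplitK (inr _)) /=.
all: rewrite /chain_entry ?ltn_ord ?(ltnNge (k.+1 + _)) ?leq_addr /= ?addKn ?valKd ?andbF //.
by rewrite andbC.
Qed.

Lemma coprimez_cross_sum (d1 e1 d2 e2 : int) :
  coprimez d1 e1 -> coprimez d2 e2 -> coprimez e1 e2 ->
  coprimez (e1 * e2) (d1 * e2 + e1 * d2).
Proof.
move=> co_de1 co_de2 co_e12; rewrite coprimezMl; apply/andP; split.
  by rewrite /coprimez addrC mulrC gcdzMDl Gauss_gcdzl // gcdzC.
by rewrite /coprimez gcdzMDl Gauss_gcdzr 1?coprimez_sym // gcdzC.
Qed.

Lemma det_Zmat n1 n2 k (C1 : 'M[int]_n1) xi1 (C2 : 'M[int]_n2) xi2 :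
  \det (Zmat k.+1 C1 xi1 C2 xi2) =
    \det C1 * Delta C2 xi2 + Delta C1 xi1 * (\det C2 + k%:Z * Delta C2 xi2).
Proof.
rewrite Zmat_glue det_glue_mx row'_col'_chain_mx !det_chain_mx /Delta /detm1 intS.
ring.
Qed.

Theorem lemma3p8 (n1 : nat) (C1 : 'M[int]_n1) (xi1 : 'I_n1)
    (n2 : nat) (C2 : 'M[int]_n2) (xi2 : 'I_n2) :
  marked_sgcm C1 xi1 -> marked_sgcm C2 xi2 ->
  extensible_pair C1 xi1 C2 xi2 ->
  forall k : nat, (1 <= k)%N ->
    gcdz (Delta C1 xi1 * Delta C2 xi2) (\det (Zmat k C1 xi1 C2 xi2)) = 1.
Proof.
move=> _ _ [[_ _ /eqP co1] [[_ _ /eqP co2] /eqP co12]] [|k] // _.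
rewrite det_Zmat; apply/eqP/coprimez_cross_sum => //.
by rewrite /coprimez gcdzC addrC gcdzMDl gcdzC.
Qed.
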